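(* Suppose Assumptions 1, 2, 3 and 4 below hold (with all expectations involved finite). Let $\alpha=\big(P(D_{11}=1)-P(D_{10}=1)\big)/DID_D$, let $S'=\{D(0)\neq D(1),\,G=0\}$ and $\Delta'=E\big(Y(1)-Y(0)\mid S',T=1\big)$ (with the convention that $(1-\alpha)\Delta'=0$ when $P(S')=0$, in which case $\alpha=1$). Then 1. $W_{DID}=\alpha\Delta+(1-\alpha)\Delta'$. 2. If in addition either $\Delta=\Delta'$, or Assumption 5 holds, then $W_{DID}=\Delta$.
   Context: Standing framework. Let $(Y(0),Y(1),V,G,T)$ be random variables on a common probability space, with $G\in\{0,1\}$ (group; $G=1$ is the ''treatment group''), $T\in\{0,1\}$ (period), $V$ real-valued, and let $(v_{gt})_{(g,t)\in\{0,1\}^2}$ be real constants. The treatment is $D=1\{V\geq v_{GT}\}$ and the potential treatments are $D(t)=1\{V\geq v_{Gt}\}$, $t\in\{0,1\}$, so that $D=D(T)$. The observed outcome is $Y=DY(1)+(1-D)Y(0)$. For any random variable $R$, $R_{gt}$ denotes a random variable distributed as $R$ conditional on $\{G=g,T=t\}$ and $R_{dgt}$ one distributed as $R$ conditional on $\{D=d,G=g,T=t\}$; e.g. $Y_{gt}(d)$ is distributed as $Y(d)$ given $G=g,T=t$. $F_R$ is the cdf of $R$, $F_{R\mid A}$ its cdf conditional on $A$, and for a nondecreasing $F$, $F^{-1}(q)=\inf\{x\in\mathbb{R}:F(x)\geq q\}$. Let $S=\{D(0)<D(1),\,G=1\}$ (treatment-group switchers) and $\Delta=E(Y(1)-Y(0)\mid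 S,T=1)$. Assumption 1: $D=1\{V\geq v_{GT}\}$ with $V$ independent of $T$ conditional on $G$. Assumption 2: $E(D_{11})>E(D_{10})$ and $E(D_{11})-E(D_{10})>E(D_{01})-E(D_{00})$. Assumption 3 (common trends): $E(Y(0)\mid G,T=1)-E(Y(0)\mid G,T=0)$ does not depend on $G$. Assumption 4: $E(Y(1)-Y(0)\mid G,T=1,D(0)=1)=E(Y(1)-Y(0)\mid G,T=0,D(0)=1)$. Assumption 5: $0<E(D_{01})=E(D_{00})<1$. For any random variable $R$, $DID_R=E(R_{11})-E(R_{10})-\big(E(R_{01})-E(R_{00})\big)$, and $W_{DID}=DID_Y/DID_D$. *)

From mathcomp Require Import all_boot all_order all_algebra.
From mathcomp Require Import all_classical all_reals all_analysis.
Set Implicit Arguments. Unset Strict Implicit. Unset Printing Implicit Defensive.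
Import Order.TTheory GRing.Theory Num.Theory.
Local Open Scope classical_set_scope.
Local Open Scope ring_scope.

Definition prob d (Om : measurableType d) (R : realType)
  (P : probability Om R) (A : set Om) : R := fine (P A).

(* E(X | A) := E(X 1_A) / P(A)  (equals 0 when P(A) = 0, by x/0 = 0) *)
Definition cexp d (Om : measurableType d) (R : realType)
  (P : probability Om R) (X : Om -> R) (A : set Om) : R :=
  fine (\int[P]_(w in A) (X w)%:E) / prob P A.

Definition cell (Om : Type) (G Tm : Om -> bool) (g t : bool) : set Om :=
  [set w | G w = g /\ Tm w = t].

Definition Egt d (Om : measurableType d) (R : realType)
  (P : probability Om R) (G Tm : Om -> bool) (X : Om -> R) (g t : bool) : R :=
  cexp P X (cell G Tm g t).

Definition DID d (Om : measurableType d) (R : realType)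
  (P : probability Om R) (G Tm : Om -> bool) (X : Om -> R) : R :=
  Egt P G Tm X true true - Egt P G Tm X true false
  - (Egt P G Tm X false true - Egt P G Tm X false false).

Definition Dpot (Om : Type) (R : realType) (v : bool -> bool -> R)
  (V : Om -> R) (G : Om -> bool) (t : bool) (w : Om) : bool :=
  v (G w) t <= V w.

Definition Dtr (Om : Type) (R : realType) (v : bool -> bool -> R)
  (V : Om -> R) (G Tm : Om -> bool) (w : Om) : bool :=
  Dpot v V G (Tm w) w.

Definition Yobs (Om : Type) (R : realType) (v : bool -> bool -> R)
  (V : Om -> R) (G Tm : Om -> bool) (Y0 Y1 : Om -> R) (w : Om) : R :=
  (Dtr v V G Tm w)%:R * Y1 w + (1 - (Dtr v V G Tm w)%:R) * Y0 w.

(* Because V is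
   independent of T given G (Assumption 1), the period-0 threshold event {V >= v_g0} has the same
   conditional probability in both periods, so the change of E(D) from period 0 to period 1 is
   +- P(switchers, T = 1) / P(G = g, T = 1), the switchers being the units with V between the two
   thresholds.  Assumption 4 does the same for E((Y(1) - Y(0)) 1{V >= v_g0}), hence the change of
   E(Y) exceeds that of E(Y(0)) by +- E((Y(1) - Y(0)) 1{switchers, T = 1}) / P(G = g, T = 1), i.e.
   by Delta_g times the change of E(D).  Assumption 3 cancels the Y(0) trends in DID_Y, leaving
   DID_Y = Delta x - Delta' y with x, y the changes of E(D) in the two groups; Assumption 2 makes
   x > 0 (so the switchers of the treatment group are the compliers D(0) < D(1)) and x > y. *)

From mathcomp Require Import all_boot all_order all_algebra.
From mathcomp Require Import all_classical all_reals all_analysis.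
From mathcomp Require Import measurable_realfun ring lra.
Import Order.TTheory GRing.Theory Num.Theory.
Local Open Scope classical_set_scope.
Local Open Scope ring_scope.

Section partial_expectation.
Context {d} {Om : measurableType d} {R : realType} (P : probability Om R).

Lemma probE {A} : measurable A -> P A = (prob P A)%:E.
Proof. by move=> mA; rewrite /prob fineK// fin_num_measure. Qed.

Lemma prob_ge0 A : 0 <= prob P A.
Proof. by rewrite /prob fine_ge0// measure_ge0. Qed.

Lemma le_prob {A B} : measurable A -> measurable B -> A `<=` B ->
  prob P A <= prob P B.
Proof.
move=> mA mB AB; rewrite /prob fine_le ?fin_num_measure//.
by rewrite le_measure ?inE.
Qed.

Lemma integrableTS {X A} : measurable A ->
  P.-integrable setT (EFin \o X) -> P.-integrable A (EFin \o X).
Proof. by move=> mA; apply: integrableS measurableT mA (@subsetT _ _). Qed.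

Definition pexp (X : Om -> R) (A : set Om) : R :=
  fine (\int[P]_(w in A) (X w)%:E).

Lemma cexpE X A : cexp P X A = pexp X A / prob P A.
Proof. by []. Qed.

Lemma eq_pexp {X X' A} : {in A, X =1 X'} -> pexp X A = pexp X' A.
Proof. by move=> XX'; rewrite /pexp; congr fine; apply: eq_integral => w /XX' ->. Qed.

Lemma pexpU {X A B} : measurable A -> measurable B -> A `&` B = set0 ->
  measurable_fun (A `|` B) X ->
  P.-integrable A (EFin \o X) -> P.-integrable B (EFin \o X) ->
  pexp X (A `|` B) = pexp X A + pexp X B.
Proof.
move=> mA mB AB0 mX iA iB; rewrite /pexp integral_setU//; last exact/eqP.
- by rewrite fineD// integrable_fin_num.
- exact/measurable_EFinP.
Qed.

Lemma pexpB {X X' A} : measurable A ->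
  P.-integrable A (EFin \o X) -> P.-integrable A (EFin \o X') ->
  pexp (fun w => X w - X' w) A = pexp X A - pexp X' A.
Proof.
move=> mA iX iX'; rewrite /pexp.
under eq_integral do rewrite EFinB.
by rewrite integralB_EFin// fineB// integrable_fin_num.
Qed.

Lemma pexp1 {A} : measurable A -> pexp (fun=> 1) A = prob P A.
Proof. by move=> mA; rewrite /pexp /prob integral_cst// mul1e. Qed.

Lemma pexp_indic {A B} : measurable A -> measurable B ->
  pexp (fun w => (\1_A w)) B = prob P (A `&` B).
Proof. by move=> mA mB; rewrite /pexp integral_indic. Qed.

Lemma pexpE {X A} : measurable A -> measurable_fun A X ->
  pexp X A = cexp P X A * prob P A.
Proof.
move=> mA mX; rewrite cexpE; have [A0|A0] := eqVneq (prob P A) 0; last first.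
  by rewrite divfK.
rewrite A0 mulr0 /pexp null_set_integral//.
- exact/measurable_EFinP.
- by move: A0; rewrite /prob => /eqP; rewrite fine_eq0 ?fin_num_measure// => /eqP.
Qed.

End partial_expectation.

Section boolean_events.
Context {d} {Om : measurableType d}.
Implicit Types b : Om -> bool.

Lemma measurable_funbP b : measurable_fun setT b <-> measurable [set w | b w].
Proof.
split=> [mb|mb]; last first.
  by apply: (measurable_fun_bool true); rewrite setTI.
by have := mb measurableT [set true] I; rewrite setTI.
Qed.

Lemma measurable_eqb {b} x : measurable_fun setT b -> measurable [set w | b w = x].
Proof.
move=> mb; case: x; first exact/measurable_funbP.
have /measurable_funbP := measurable_neg mb.
rewrite (_ : [set w | ~~ b w] = [set w | b w = false]) //.
by apply/seteqP; split=> w /=; [move/negbTE | move=> ->].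
Qed.

End boolean_events.

Lemma le_neq_min_max (R : realDomainType) (x y z : R) :
  ((y <= z) != (x <= z)) = (Num.min x y <= z < Num.max x y).
Proof.
case: (leP x y) => xy.
- case: (leP x z) => xz; case: (leP y z) => yz //=.
  by move: (le_trans xy yz); rewrite leNgt xz.
- case: (leP x z) => xz; case: (leP y z) => yz //=.
  by move: (lt_trans yz xy); rewrite ltNge xz.
Qed.

Lemma le_ltn_neq (R : realDomainType) (x y z : R) : y <= x ->
  ((x <= z)%R < (y <= z)%R)%N = ((x <= z) != (y <= z)).
Proof.
move=> yx; case: (leP x z) => xz; case: (leP y z) => yz //=.
by move: (lt_le_trans yz yx); rewrite ltNge xz.
Qed.

Definition above {Om : Type} {R : realType} (V : Om -> R) (r : R) : set Om :=
  [set w | r <= V w].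

Definition band {Om : Type} {R : realType} (V : Om -> R) (s s' : R) : set Om :=
  [set w | s <= V w < s'].

Definition switchers {Om : Type} {R : realType} (v : bool -> bool -> R)
    (V : Om -> R) (G : Om -> bool) (g : bool) : set Om :=
  [set w | Dpot v V G false w != Dpot v V G true w /\ G w = g].

Lemma switchers_strict {Om : Type} {R : realType} {v : bool -> bool -> R}
    {V : Om -> R} {G : Om -> bool} {g : bool} : v g true <= v g false ->
  [set w | (Dpot v V G false w < Dpot v V G true w)%N /\ G w = g]
  = switchers v V G g.
Proof.
move=> le_v; apply/seteqP; split=> w /= [+ Gw];
  by rewrite /switchers /Dpot /= Gw le_ltn_neq.
Qed.

Section did_by_group.
Context {d} {Om : measurableType d} {R : realType} {P : probability Om R}.
Context {Y0 Y1 V : Om -> R} {G Tm : Om -> bool} {v : bool -> bool -> R}.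
Hypotheses (mG : measurable_fun setT G) (mT : measurable_fun setT Tm).
Hypotheses (mV : measurable_fun setT V).
Hypotheses (mY0 : measurable_fun setT Y0) (mY1 : measurable_fun setT Y1).
Hypotheses (iY0 : P.-integrable setT (EFin \o Y0)).
Hypotheses (iY1 : P.-integrable setT (EFin \o Y1)).
Hypothesis cell_gt0 : forall g t, (0 < P (cell G Tm g t))%E.

Local Notation C := (cell G Tm).
Local Notation Z := (fun w => Y1 w - Y0 w).
Local Notation D := (fun w => (Dtr v V G Tm w)%:R).
Local Notation Y := (Yobs v V G Tm Y0 Y1).

Lemma measurable_above r : measurable (above V r).
Proof. exact/measurable_funbP/measurable_fun_ler. Qed.

Lemma measurable_band s s' : measurable (band V s s').
Proof.
apply/measurable_funbP/measurable_and; first exact: measurable_fun_ler.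
exact: measurable_fun_ltr.
Qed.

Lemma measurable_cell g t : measurable (C g t).
Proof. by apply: measurableI; exact: measurable_eqb. Qed.

Lemma measurable_Dpot s : measurable_fun setT (Dpot v V G s).
Proof.
rewrite (_ : Dpot v V G s = fun w => if G w then v true s <= V w else v false s <= V w).
  by apply: measurable_fun_ifT => //; exact: measurable_fun_ler.
by apply/funext => w; rewrite /Dpot; case: (G w).
Qed.

Lemma measurable_switchers g : measurable (switchers v V G g).
Proof.
apply: measurableI; last exact: measurable_eqb.
apply/(measurable_funbP (fun w => Dpot v V G false w != Dpot v V G true w)).
rewrite (_ : (fun w => _) = fun w => if Dpot v V G false w then ~~ Dpot v V G true w
                                      else Dpot v V G true w).
  by apply: measurable_fun_ifT; [|apply: measurable_neg|]; exact: measurable_Dpot.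
by apply/funext => w; case: (Dpot v V G false w); case: (Dpot v V G true w).
Qed.

Lemma measurable_Dtr : measurable_fun setT (Dtr v V G Tm).
Proof.
rewrite (_ : Dtr _ _ _ _ = fun w => if Tm w then Dpot v V G true w else Dpot v V G false w).
  by apply: measurable_fun_ifT => //; exact: measurable_Dpot.
by apply/funext => w; rewrite /Dtr; case: (Tm w).
Qed.

Lemma YobsE w : Y w = if Dtr v V G Tm w then Y1 w else Y0 w.
Proof. by rewrite /Yobs; case: (Dtr _ _ _ _ w) => /=; ring. Qed.

Lemma measurable_Yobs : measurable_fun setT Y.
Proof.
rewrite (_ : Yobs _ _ _ _ _ _ = fun w => if Dtr v V G Tm w then Y1 w else Y0 w).
  by apply: measurable_fun_ifT => //; exact: measurable_Dtr.
exact/funext/YobsE.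
Qed.

Lemma Dtr_cell {g t w} : C g t w -> Dtr v V G Tm w = (v g t <= V w).
Proof. by case=> Gw Tw; rewrite /Dtr /Dpot Gw Tw. Qed.

Lemma prob_cell_gt0 g t : 0 < prob P (C g t).
Proof. by have := cell_gt0 g t; rewrite (probE P) ?lte_fin //; exact: measurable_cell. Qed.

Lemma above_split A {s s'} : s <= s' ->
  above V s `&` A = (above V s' `&` A) `|` (band V s s' `&` A).
Proof.
move=> ss'; apply/seteqP; split=> w /=.
  by move=> [sV Aw]; case: (leP s' (V w)) => s'V; [left | right; split=> //; apply/andP].
by case=> [[s'V Aw] | [/andP[sV _] Aw]]; split=> //; exact: le_trans s'V.
Qed.

Lemma above_band_disj s s' A : (above V s' `&` A) `&` (band V s s' `&` A) = set0.
Proof.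
apply/seteqP; split=> w //= [[s'V _] [/andP[_ Vs'] _]].
by move: Vs'; rewrite ltNge s'V.
Qed.

Lemma pexp_above_sub X A a b : measurable A -> measurable_fun setT X ->
  P.-integrable setT (EFin \o X) ->
  pexp P X (above V a `&` A) - pexp P X (above V b `&` A)
  = (-1) ^+ (b < a)%R * pexp P X (band V (Num.min a b) (Num.max a b) `&` A).
Proof.
move=> mA mX iX.
have pexp_split s s' : s <= s' -> pexp P X (above V s `&` A)
    = pexp P X (above V s' `&` A) + pexp P X (band V s s' `&` A).
  have mAs' := measurableI _ _ (measurable_above s') mA.
  have mBss' := measurableI _ _ (measurable_band s s') mA.
  move=> ss'; rewrite (above_split A ss') pexpU ?above_band_disj //.
  - exact: measurable_funTS mX.
  - exact: (integrableTS P mAs' iX).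
  - exact: (integrableTS P mBss' iX).
case: (leP a b) => ab; first by rewrite (pexp_split _ _ ab) expr0; ring.
by rewrite (pexp_split _ _ (ltW ab)) expr1; ring.
Qed.

Lemma Egt_D g t :
  Egt P G Tm D g t = prob P (above V (v g t) `&` C g t) / prob P (C g t).
Proof.
rewrite /Egt cexpE -(pexp_indic P (measurable_above _) (measurable_cell g t)).
congr (_ / _); apply: eq_pexp => w; rewrite inE => Cw.
rewrite indicE (Dtr_cell Cw).
by case: (boolP (v g t <= V w)) => h; [rewrite mem_set | rewrite memNset //; exact/negP].
Qed.

Lemma Egt_Yobs g t : Egt P G Tm Y g t
  = Egt P G Tm Y0 g t + pexp P Z (above V (v g t) `&` C g t) / prob P (C g t).
Proof.
set A := above V (v g t) `&` C g t; set B := ~` above V (v g t) `&` C g t.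
have mC := measurable_cell g t.
have mA : measurable A := measurableI _ _ (measurable_above _) mC.
have mB : measurable B := measurableI _ _ (measurableC (measurable_above _)) mC.
have CAB : C g t = A `|` B by rewrite -setIUl setUCr setTI.
have AB0 : A `&` B = set0 by rewrite setIACA setICr set0I.
have YA : {in A, Y1 =1 Y} by move=> w; rewrite inE => -[Vw Cw]; rewrite YobsE (Dtr_cell Cw) Vw.
have YB : {in B, Y0 =1 Y}.
  by move=> w; rewrite inE => -[/negP Vw Cw]; rewrite YobsE (Dtr_cell Cw) (negbTE Vw).
have pexp_CAB X : measurable_fun setT X -> P.-integrable A (EFin \o X) ->
    P.-integrable B (EFin \o X) -> pexp P X (C g t) = pexp P X A + pexp P X B.
  move=> mX iA iB; rewrite CAB pexpU //.
  exact: measurable_funTS mX.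
have iY1A := integrableTS P mA iY1.
have iY0B := integrableTS P mB iY0.
have iYA : P.-integrable A (EFin \o Y).
  by apply: (eq_integrable mA _ _ _ iY1A) => w /YA /= ->.
have iYB : P.-integrable B (EFin \o Y).
  by apply: (eq_integrable mB _ _ _ iY0B) => w /YB /= ->.
rewrite /Egt !cexpE -mulrDl; congr (_ / _).
rewrite (pexp_CAB _ measurable_Yobs iYA iYB).
rewrite (pexp_CAB _ mY0 (integrableTS P mA iY0) iY0B).
rewrite -(eq_pexp P YA) -(eq_pexp P YB) (pexpB P mA iY1A (integrableTS P mA iY0)).
by ring.
Qed.

Lemma prob_above_sub A a b : measurable A ->
  prob P (above V a `&` A) - prob P (above V b `&` A)
  = (-1) ^+ (b < a)%R * prob P (band V (Num.min a b) (Num.max a b) `&` A).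
Proof.
move=> mA; have mI B : measurable B -> measurable (B `&` A) by move=> mB; exact: measurableI.
rewrite -!(pexp1 P (mI _ (measurable_above _))) -(pexp1 P (mI _ (measurable_band _ _))).
by apply: pexp_above_sub => //; exact: finite_measure_integrable_cst.
Qed.

Lemma switchers_cellT g : switchers v V G g `&` [set w | Tm w = true]
  = band V (Num.min (v g true) (v g false)) (Num.max (v g true) (v g false)) `&` C g true.
Proof.
apply/seteqP; split=> w /=.
  by move=> [[+ Gw] Tw]; rewrite /Dpot Gw le_neq_min_max.
move=> [+ [Gw Tw]]; rewrite /band /= -le_neq_min_max => neq.
by split=> //; split=> //; rewrite /Dpot Gw.
Qed.

Hypothesis V_indep_T : forall (g t : bool) (B : set R), measurable B ->
  (P ([set w | B (V w)] `&` C g t) * P [set w | G w = g]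
   = P ([set w | B (V w)] `&` [set w | G w = g]) * P (C g t))%E.

Lemma cprob_above_cell g t r :
  prob P (above V r `&` C g t) / prob P (C g t)
  = prob P (above V r `&` [set w | G w = g]) / prob P [set w | G w = g].
Proof.
have mGg := measurable_eqb g mG.
have mAC := measurableI _ _ (measurable_above r) (measurable_cell g t).
have mAG := measurableI _ _ (measurable_above r) mGg.
have pGg : 0 < prob P [set w | G w = g].
  apply: lt_le_trans (prob_cell_gt0 g t) (le_prob P (measurable_cell g t) mGg _).
  by move=> w [].
apply/eqP; rewrite eqr_div ?(gt_eqF pGg) ?(gt_eqF (prob_cell_gt0 g t)) //; apply/eqP.
have := V_indep_T g t _ (measurable_itv `[r, +oo[).
have -> : [set w | `[r, +oo[%classic (V w)] = above V r.
  by apply/seteqP; split=> w /=; rewrite in_itv /= andbT.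
rewrite (probE P mAC) (probE P mGg) (probE P mAG) (probE P (measurable_cell g t)).
by rewrite -!EFinM => -[].
Qed.

Lemma cprob_above_T g r :
  prob P (above V r `&` C g true) / prob P (C g true)
  = prob P (above V r `&` C g false) / prob P (C g false).
Proof. by rewrite !cprob_above_cell. Qed.

Lemma Egt_D_trend g : Egt P G Tm D g true - Egt P G Tm D g false
  = (-1) ^+ (v g false < v g true)%R
    * prob P (switchers v V G g `&` [set w | Tm w = true]) / prob P (C g true).
Proof.
rewrite !Egt_D -cprob_above_T -mulrBl prob_above_sub ?switchers_cellT //.
exact: measurable_cell.
Qed.

Lemma le_v_of_D_increase g :
  Egt P G Tm D g false < Egt P G Tm D g true -> v g true <= v g false.
Proof.
rewrite -subr_gt0 Egt_D_trend; case: (ltP (v g false) (v g true)) => //= _.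
rewrite expr1 mulN1r mulNr oppr_gt0 ltNge => /negP; case.
by rewrite divr_ge0 ?prob_ge0.
Qed.

Lemma Egt_D_eq_of_null_switchers g : P (switchers v V G g) = 0%E ->
  Egt P G Tm D g true = Egt P G Tm D g false.
Proof.
move=> S0; apply/eqP; rewrite -subr_eq0 Egt_D_trend.
suff -> : prob P (switchers v V G g `&` [set w | Tm w = true]) = 0 by rewrite mulr0 mul0r.
apply/eqP; rewrite eq_le prob_ge0 andbT.
have <- : prob P (switchers v V G g) = 0 by rewrite /prob S0.
apply: le_prob (@subIsetl _ _ _); last exact: measurable_switchers.
exact: measurableI (measurable_switchers g) (measurable_eqb true mT).
Qed.

Hypothesis cate_stable : forall g : bool,
  cexp P Z [set w | G w = g /\ Tm w = true /\ Dpot v V G false w]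
  = cexp P Z [set w | G w = g /\ Tm w = false /\ Dpot v V G false w].

Lemma measurable_Z : measurable_fun setT Z.
Proof. exact: measurable_funB. Qed.

Lemma integrable_Z : P.-integrable setT (EFin \o Z).
Proof.
rewrite (_ : EFin \o Z = ((EFin \o Y1) \- (EFin \o Y0))%E); first exact: integrableB.
by apply/funext => w /=; rewrite EFinB.
Qed.

Lemma pexp_Z_above_T g :
  pexp P Z (above V (v g false) `&` C g true) / prob P (C g true)
  = pexp P Z (above V (v g false) `&` C g false) / prob P (C g false).
Proof.
have AC t : [set w | G w = g /\ Tm w = t /\ Dpot v V G false w]
    = above V (v g false) `&` C g t.
  apply/seteqP; split=> w /=; first by move=> [Gw [Tw]]; rewrite /Dpot Gw.
  by move=> [+ [Gw Tw]]; rewrite /Dpot Gw.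
have mAC t := measurableI _ _ (measurable_above (v g false)) (measurable_cell g t).
have := cate_stable g; rewrite !AC => cate_g.
by rewrite !(pexpE P (mAC _) (measurable_funTS measurable_Z)) cate_g -!mulrA cprob_above_T.
Qed.

Lemma Egt_Yobs_trend g :
  (Egt P G Tm Y g true - Egt P G Tm Y g false)
    - (Egt P G Tm Y0 g true - Egt P G Tm Y0 g false)
  = (-1) ^+ (v g false < v g true)%R
    * pexp P Z (switchers v V G g `&` [set w | Tm w = true]) / prob P (C g true).
Proof.
rewrite !Egt_Yobs -pexp_Z_above_T switchers_cellT -pexp_above_sub //.
- by rewrite mulrBl; ring.
- exact: measurable_cell.
- exact: measurable_Z.
- exact: integrable_Z.
Qed.

Lemma excess_trend_Yobs g :
  (Egt P G Tm Y g true - Egt P G Tm Y g false)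
    - (Egt P G Tm Y0 g true - Egt P G Tm Y0 g false)
  = cexp P Z (switchers v V G g `&` [set w | Tm w = true])
    * (Egt P G Tm D g true - Egt P G Tm D g false).
Proof.
have mST := measurableI _ _ (measurable_switchers g) (measurable_eqb true mT).
rewrite Egt_Yobs_trend Egt_D_trend (pexpE P mST) //; first by ring.
exact: measurable_funTS measurable_Z.
Qed.

End did_by_group.

Theorem theorem1 (d : measure_display) (Om : measurableType d) (R : realType)
  (P : probability Om R) (Y0 Y1 V : Om -> R) (G Tm : Om -> bool)
  (v : bool -> bool -> R) :
  measurable [set w | G w] -> measurable [set w | Tm w] ->
  measurable_fun setT V -> measurable_fun setT Y0 -> measurable_fun setT Y1 ->
  P.-integrable setT (EFin \o Y0) -> P.-integrable setT (EFin \o Y1) ->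
  (forall g t, (0 < P (cell G Tm g t))%E) ->
  (* Assumption 1 *)
  (forall (g t : bool) (B : set R), measurable B ->
     (P ([set w | B (V w)] `&` cell G Tm g t) * P [set w | G w = g]
      = P ([set w | B (V w)] `&` [set w | G w = g])
        * P (cell G Tm g t))%E) ->
  (* Assumption 2 *)
  let D : Om -> R := fun w => (Dtr v V G Tm w)%:R in
  Egt P G Tm D true true > Egt P G Tm D true false ->
  Egt P G Tm D true true - Egt P G Tm D true false
    > Egt P G Tm D false true - Egt P G Tm D false false ->
  (* Assumption 3 *)
  Egt P G Tm Y0 true true - Egt P G Tm Y0 true false
    = Egt P G Tm Y0 false true - Egt P G Tm Y0 false false ->
  (* Assumption 4 *)
  (forall g : bool,
     cexp P (fun w => Y1 w - Y0 w)
       [set w | G w = g /\ Tm w = true /\ Dpot v V G false w]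
     = cexp P (fun w => Y1 w - Y0 w)
       [set w | G w = g /\ Tm w = false /\ Dpot v V G false w]) ->
  let Y : Om -> R := Yobs v V G Tm Y0 Y1 in
  let W_DID := DID P G Tm Y / DID P G Tm D in
  let alpha := (Egt P G Tm D true true - Egt P G Tm D true false)
                 / DID P G Tm D in
  let Ssw : set Om := [set w | (Dpot v V G false w < Dpot v V G true w)%N
                             /\ G w = true] in
  let S' : set Om := [set w | Dpot v V G false w != Dpot v V G true w
                              /\ G w = false] in
  let Delta := cexp P (fun w => Y1 w - Y0 w) (Ssw `&` [set w | Tm w = true]) in
  let Delta' := cexp P (fun w => Y1 w - Y0 w) (S' `&` [set w | Tm w = true]) in
  let rest := if P S' == 0%E then 0 else (1 - alpha) * Delta' in
  let A5 := 0 < Egt P G Tm D false true /\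
            Egt P G Tm D false true = Egt P G Tm D false false /\
            Egt P G Tm D false false < 1 in
  W_DID = alpha * Delta + rest /\
  (Delta = Delta' \/ A5 -> W_DID = Delta).
Proof.
move=> /measurable_funbP mG /measurable_funbP mT mV mY0 mY1 iY0 iY1 cell_gt0 V_indep_T
  D D_up D_did Y0_trend cate_stable Y W_DID alpha Ssw S' Delta Delta' rest A5.
have gap := excess_trend_Yobs mG mT mV mY0 mY1 iY0 iY1 cell_gt0 V_indep_T cate_stable.
have gap1 := gap true; have gap0 := gap false; rewrite -/D -/Y in gap1 gap0.
have le_v := le_v_of_D_increase mG mT mV cell_gt0 V_indep_T true D_up.
rewrite -[cexp _ _ (_ `&` _)]/Delta' in gap0.
rewrite -(switchers_strict le_v) -[cexp _ _ (_ `&` _)]/Delta in gap1.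
have D_null : P S' = 0%E -> Egt P G Tm D false true = Egt P G Tm D false false.
  exact: Egt_D_eq_of_null_switchers mG mT mV cell_gt0 V_indep_T false.
rewrite -subr_gt0 in D_up; rewrite -subr_gt0 in D_did.
set x := Egt P G Tm D true true - Egt P G Tm D true false in gap1 D_up D_did *.
set y := Egt P G Tm D false true - Egt P G Tm D false false in gap0 D_did D_null *.
have DIDY : DID P G Tm Y = Delta * x - Delta' * y by rewrite /DID; lra.
have DIDD : DID P G Tm D = x - y by [].
have y_eq0 : Egt P G Tm D false true = Egt P G Tm D false false -> y = 0.
  by rewrite /y => ->; exact: subrr.
have xy_neq0 : x - y != 0 by rewrite gt_eqF.
rewrite /W_DID /rest /alpha DIDY DIDD -/x; split.
  case: ifP => [/eqP/D_null/y_eq0 y0 | _]; last by field.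
  by rewrite y0 !(subr0, mulr0) addr0; field; rewrite gt_eqF.
case=> [<- | [_ [/y_eq0 y0 _]]]; first by field.
by rewrite y0 !(subr0, mulr0); field; rewrite gt_eqF.
Qed.
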